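(* Let $g:(0,\infty)\times[0,\infty)\to\mathbb{R}$ be non-decreasing in the second variable, and assume that for some $t_0$, $S=\sup_{t>t_0,\,h,k>0}|g(t,h+k)-g(t+h,k)-g(t,h)|<\infty$. Then for any sequence $t_n\to\infty$, $$\limsup_{h\to+\infty}\limsup_{n}\frac{g(t_n,h)}{h}\le\limsup_{h\to+\infty}\limsup_{t\to+\infty}\frac{g(t,h)}{h}.$$ Moreover, for every $\kappa>0$ there is a sequence $\bar t_n\to\infty$ such that $$\limsup_{h\to+\infty}\limsup_{t\to+\infty}\frac{g(t,h)}{h}\le\liminf_{h\to+\infty}\liminf_{n}\frac{g(\bar t_n,h)}{h}+\frac{2S}{\kappa}.$$ *)

From HB Require Import structures.
From mathcomp Require Import all_boot all_order all_algebra.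
From mathcomp Require Import all_classical all_reals all_analysis.
Set Implicit Arguments. Unset Strict Implicit. Unset Printing Implicit Defensive.
Import Order.TTheory GRing.Theory Num.Theory.
Import numFieldNormedType.Exports.
Local Open Scope classical_set_scope.
Local Open Scope ring_scope.

Definition cocycle_defect_sup (R : realType) (g : R -> R -> R) (t0 : R) : \bar R :=
  ereal_sup [set (`| g x.1.1 (x.1.2 + x.2) - g (x.1.1 + x.1.2) x.2 - g x.1.1 x.1.2 |)%:E
            | x in [set x : R * R * R | t0 < x.1.1 /\ 0 < x.1.2 /\ 0 < x.2]].

From HB Require Import structures.
From mathcomp Require Import all_boot all_order all_algebra.
From mathcomp Require Import all_classical all_reals all_analysis.
From mathcomp Require Import ring lra.
Import Order.TTheory GRing.Theory Num.Theory.
Import numFieldNormedType.Exports.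
Local Open Scope classical_set_scope.
Local Open Scope ring_scope.

(* The first inequality holds because t_n -> +oo, so the limsup along t_n is
   dominated by the limsup in t for every h.  The second even holds without the
   2S/kappa term.  If g(t,1) is unbounded as t -> +oo, a sequence with
   g(t_n,1) -> +oo makes its right-hand side +oo by monotonicity in h.
   Otherwise the approximate cocycle identity bounds g on every strip
   [t2,+oo) x [0,N].  Given a level b below the left-hand side, pick T and H
   with g(T,H) > aH for some a > b, and an almost-minimiser x of
   D(y) = g(T,y) - b y on (0,H]: the cocycle inequality gives
   g(T+x,h) >= D(x+h) - D(x) + b h - S >= b h - 1 - S, and the strip bound
   forces x <= H - N, so this holds for all h in (0,N].  Letting b increase to
   the limsup and N to +oo along a sequence produces the times t_bar_n. *)

Section limf_esup_einf.
Context {R : realType}.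
Local Open Scope ereal_scope.

Lemma lee_lt_fin (x y : \bar R) : (forall a : R, a%:E < x -> a%:E <= y) -> x <= y.
Proof.
case: x => [x| |] xy; last by rewrite leNye.
- apply/lee_subgt0Pr => e e0; rewrite -EFinB; apply: xy.
  by rewrite lte_fin gtrDl oppr_lt0.
- by rewrite (eq_infty (fun r => xy r (ltry r))).
Qed.

Context {T0 : choiceType} {T : filteredType T0}.
Implicit Types (F : set_system T) (f : T -> \bar R).

Lemma limf_esup_gt_in {F f V x} : x < limf_esup f F -> F V -> exists2 t, V t & x < f t.
Proof.
rewrite limf_esupE => xf FV.
have : x < ereal_sup (f @` V).
  by apply: lt_le_trans xf _; apply: ereal_inf_lbound; exists V.
by case/ereal_sup_gt => _ [t Vt <-]; exists t.
Qed.

Lemma limf_einf_ge_near F f a : (\forall t \near F, a <= f t) -> a <= limf_einf f F.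
Proof.
move=> Fa; rewrite limf_einfE.
apply: (@le_trans _ _ (ereal_inf (f @` [set t | a <= f t]))).
  by apply: le_ereal_inf_tmp => _ [t ft <-].
by apply: ereal_sup_ubound; exists [set t | a <= f t].
Qed.

Lemma le_limf_esup F f f' : (forall t, f t <= f' t) -> limf_esup f F <= limf_esup f' F.
Proof.
move=> ff'; rewrite !limf_esupE; apply: le_ereal_inf_tmp => _ [V FV <-].
apply: (@le_trans _ _ (ereal_sup (f @` V))); first by apply: ereal_inf_lbound; exists V.
apply: ge_ereal_sup => _ [t Vt <-]; apply: le_trans (ff' t) _.
by apply: ereal_sup_ubound; exists t.
Qed.

Lemma limf_esup_comp_le {U0 : choiceType} {U : filteredType U0} {G : set_system U}
    {u : U -> T} {F f} :
  u @ G --> F -> limf_esup (f \o u) G <= limf_esup f F.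
Proof.
move=> uGF; rewrite !limf_esupE; apply: le_ereal_inf_tmp => _ [V FV <-].
apply: (@le_trans _ _ (ereal_sup ((f \o u) @` (u @^-1` V)))).
  by apply: ereal_inf_lbound; exists (u @^-1` V) => //; exact: uGF.
by apply: ge_ereal_sup => _ [t Vt <-]; apply: ereal_sup_ubound; exists (u t).
Qed.

End limf_esup_einf.

Section real_approximation.
Context {R : realType}.

Lemma exists_near_minimizer {T : Type} (A : set T) (f : T -> R) (e : R) :
  0 < e -> A !=set0 -> (exists c, forall x, A x -> c <= f x) ->
  exists2 x, A x & forall y, A y -> f x <= f y + e.
Proof.
move=> e0 [x0 Ax0] [c cf].
have fA_inf : has_inf (f @` A).
  by split; [exists (f x0), x0 | exists c => _ [x Ax <-]; exact: cf].
have [_ [x Ax <-] fxe] := inf_adherent e0 fA_inf.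
exists x => // y Ay; apply/ltW/(lt_le_trans fxe); rewrite lerD2r.
by apply: (ge_inf fA_inf.2); exists y.
Qed.

Lemma EFin_lt_dense {x : R} {L : \bar R} :
  (x%:E < L)%E -> exists2 y : R, x < y & (y%:E < L)%E.
Proof.
case: L => [l| |] //; last by exists (x + 1); [lra | exact: ltry].
by rewrite lte_fin => xl; exists ((x + l) / 2); rewrite ?lte_fin; lra.
Qed.

Lemma exists_seq_lt_approx {L : \bar R} : L != -oo%E ->
  exists b : R^nat, (forall n, (b n)%:E < L)%E /\
    forall a, (a%:E < L)%E -> \forall n \near \oo, a < b n.
Proof.
case: L => [l| |] // _.
  exists (fun n => l - harmonic n); split => [n|a].
    by rewrite lte_fin gtrDl oppr_lt0 harmonic_gt0.
  rewrite lte_fin; apply: cvgr_gt; rewrite -[X in _ --> X]subr0.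
  exact: (cvgB (cvg_cst l) cvg_harmonic).
exists (fun n => n%:R); split => [n|a _]; first exact: ltry.
exact: (cvgry_gt cvgr_idn).
Qed.

Lemma nat_le_cvgry (u : R^nat) : (forall n, n%:R <= u n) -> u n @[n --> \oo] --> +oo.
Proof. by move=> nu; apply: ger_cvgy cvgr_idn; exact: nearW. Qed.

End real_approximation.

Section cocycle.
Context {R : realType} {g : R -> R -> R} {t0 S : R}.
Hypothesis t0_ge0 : 0 <= t0.
Hypothesis g_mono : forall {t h k : R}, 0 < t -> 0 <= h -> h <= k -> g t h <= g t k.
Hypothesis defect_sup : cocycle_defect_sup g t0 = S%:E.

Lemma cocycle_defect_le {t h k : R} : t0 < t -> 0 < h -> 0 < k ->
  `|g t (h + k) - g (t + h) k - g t h| <= S.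
Proof.
by move=> t0t h0 k0; rewrite -lee_fin -defect_sup; apply: ereal_sup_ubound; exists (t, h, k).
Qed.

Lemma approx_cocycle_le {t h k : R} : t0 < t -> 0 < h -> 0 < k ->
  g t (h + k) <= g (t + h) k + g t h + S.
Proof. by move=> t0t h0 k0; have := cocycle_defect_le t0t h0 k0; rewrite ler_norml; lra. Qed.

Lemma approx_cocycle_ge {t h k : R} : t0 < t -> 0 < h -> 0 < k ->
  g t (h + k) - g t h - S <= g (t + h) k.
Proof. by move=> t0t h0 k0; have := cocycle_defect_le t0t h0 k0; rewrite ler_norml; lra. Qed.

Lemma defect_ge0 : 0 <= S.
Proof. by apply: le_trans (cocycle_defect_le (t := t0 + 1) _ ltr01 ltr01) => //; lra. Qed.

Lemma g_bounded_on_strips {C t1 : R} : (forall t, t1 <= t -> g t 1 <= C) ->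
  forall N, exists U t2, t0 < t2 /\ forall t h, t2 <= t -> 0 <= h -> h <= N -> g t h <= U.
Proof.
move=> gC N; pose t2 := Num.max t1 (t0 + 1).
have t1t2 : t1 <= t2 by rewrite le_max lexx.
have t0t2 : t0 < t2 by rewrite lt_max ltrDl ltr01 orbT.
have g_nat n t : t2 <= t -> g t n.+1%:R <= n.+1%:R * (C + S).
  elim: n t => [|n IH] t t2t.
    by rewrite mul1r; have := gC t (le_trans t1t2 t2t); have := defect_ge0; lra.
  have := approx_cocycle_le (h := 1) (k := n.+1%:R) (lt_le_trans t0t2 t2t) ltr01 (ltr0Sn _ _).
  have := IH (t + 1) ltac:(lra); have := gC t (le_trans t1t2 t2t).
  rewrite [n.+2%:R]mulrS mulrDl mul1r; lra.
exists ((Num.truncn N).+1%:R * (C + S)), t2; split => // t h t2t h0 hN.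
apply: le_trans (g_nat _ t t2t); apply: g_mono => //.
  exact: le_lt_trans t0_ge0 (lt_le_trans t0t2 t2t).
exact: ltW (le_lt_trans hN (truncnS_gt N)).
Qed.

Lemma exists_time_above_line {a b N U t2 : R} : b < a -> 0 < N -> t0 < t2 ->
  (forall t h, t2 <= t -> 0 <= h -> h <= N -> g t h <= U) ->
  (forall M, exists H t, [/\ M < H, M < t & a * H < g t H]) ->
  forall M, exists2 s, M <= s & forall h, 0 < h -> h <= N -> b * h - 1 - S <= g s h.
Proof.
move=> ba N0 t0t2 gU g_large M.
(* [K] is large enough that [a H < g T H] rules out an almost-minimiser of [D]
   in (H - N, H]. *)
pose K := 2 * `|U| + S + 2 * (`|b| * N) + 1.
have [H [T [HM TM aH]]] := g_large (Num.max (Num.max M t2) (Num.max N (K / (a - b)))).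
move: HM TM; rewrite !gt_max => /andP[_ /andP[NH KH]] /andP[/andP[MT t2T] _].
rewrite ltr_pdivrMr ?subr_gt0 // in KH.
have t0T : t0 < T by lra.
have T0 : 0 < T := le_lt_trans t0_ge0 t0T.
pose D x := g T x - b * x.
have [x /andP[x0 xH] Dx_min] : exists2 x, 0 < x <= H & forall y, 0 < y <= H -> D x <= D y + 1.
  apply: exists_near_minimizer => //; first by exists H; rewrite /= lexx andbT (lt_trans N0 NH).
  exists (g T 0 - `|b| * H) => y /andP[y0 yH]; rewrite /D.
  have := g_mono T0 (lexx 0) (ltW y0); have := ler_norm b; have := normr_ge0 b; nra.
have xHN : x <= H - N.
  rewrite leNgt; apply/negP => HNx.
  have bN : - (`|b| * N) <= b * N by apply: lerNnormlW; rewrite normrM (ger0_norm (ltW N0)).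
  have DH_Dx : D H - D x <= `|U| + S + `|b| * N.
    have := normr_ge0 U; have := defect_ge0; have := normr_ge0 b.
    move: xH; rewrite le_eqVlt => /orP[/eqP->|]; first by rewrite subrr; nra.
    rewrite -subr_gt0 => Hx0; have := approx_cocycle_le t0T x0 Hx0; rewrite subrKC.
    have := gU (T + x) (H - x) ltac:(lra) ltac:(lra) ltac:(lra).
    have : - (`|b| * N) <= b * (H - x).
      by apply: lerNnormlW; rewrite normrM ler_wpM2l // ger0_norm; lra.
    rewrite /D; have := ler_norm U; lra.
  have := Dx_min N; rewrite N0 (ltW NH) => /(_ isT).
  have := gU T N (ltW t2T) (ltW N0) (lexx N); have := ler_norm U.
  move: DH_Dx KH; rewrite /D /K; lra.
exists (T + x); first lra.
move=> h h0 hN; have xhH : x + h <= H by lra.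
have := Dx_min (x + h); rewrite addr_gt0 //= xhH => /(_ isT).
have := approx_cocycle_ge t0T x0 h0; rewrite /D mulrDr; lra.
Qed.

Let upper_growth : \bar R :=
  limf_esup (fun h => limf_esup (fun t => (g t h / h)%:E) (pinfty_nbhs R)) (pinfty_nbhs R).
Let lower_growth_along (tb : R^nat) : \bar R :=
  limf_einf (fun h => limn_einf (fun n => (g (tb n) h / h)%:E)) (pinfty_nbhs R).

Lemma upper_growth_gt {a : R} : (a%:E < upper_growth)%E ->
  forall M, exists H t, [/\ M < H, M < t & a * H < g t H].
Proof.
move=> a_lt M.
have [H /= HM aH] := limf_esup_gt_in a_lt (nbhs_pinfty_gt (num_real (Num.max M 0))).
have [t /= Mt at_] := limf_esup_gt_in aH (nbhs_pinfty_gt (num_real M)).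
move: HM; rewrite gt_max => /andP[MH H0].
by exists H, t; split => //; rewrite -ltr_pdivlMr // -lte_fin.
Qed.

Lemma exists_seq_lower_growth_infty : ~ (exists C t1, forall t, t1 <= t -> g t 1 <= C) ->
  exists tb : R^nat, tb n @[n --> \oo] --> +oo /\ lower_growth_along tb = +oo%E.
Proof.
move=> unbdd.
have /boolp.choice[tb tb_ge] : forall n, exists t, n.+1%:R <= t /\ n%:R < g t 1.
  move=> n; apply/not_existsP => no_t; apply: unbdd; exists n%:R, n.+1%:R => t t_ge.
  by rewrite leNgt; apply/negP => gt; apply: (no_t t).
exists tb; split.
  by apply: nat_le_cvgry => n; apply: le_trans (tb_ge n).1; rewrite ler_nat.
apply/eq_infty => r; apply: limf_einf_ge_near.
apply: filterS (nbhs_pinfty_gt (num_real 1)) => h /= h1.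
apply: limf_einf_ge_near; exists (Num.truncn (r * h)).+1 => // n /= rh_n.
have [tb_n g1] := tb_ge n; have h0 : 0 < h by lra.
rewrite lee_fin ler_pdivlMr //.
have : g (tb n) 1 <= g (tb n) h.
  by apply: g_mono; [exact: lt_le_trans (ltr0Sn _ _) tb_n | exact: ler01 | exact: ltW].
have : r * h < n%:R by apply: lt_le_trans (truncnS_gt _) _; rewrite ler_nat.
lra.
Qed.

Lemma exists_seq_upper_growth_le_of_bounded {C t1 : R} : (forall t, t1 <= t -> g t 1 <= C) ->
  exists tb : R^nat, tb n @[n --> \oo] --> +oo /\ (upper_growth <= lower_growth_along tb)%E.
Proof.
move=> gC.
have [->|growth_neqNy] := eqVneq upper_growth -oo%E.
  by exists (fun n => n%:R); split; [exact: cvgr_idn | exact: leNye].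
have [b [b_lt b_approx]] := exists_seq_lt_approx growth_neqNy.
have /boolp.choice[tb tb_spec] : forall n, exists s, n%:R <= s /\
    forall h, 0 < h -> h <= n.+1%:R -> b n * h - 1 - S <= g s h.
  move=> n; have [a ba aL] := EFin_lt_dense (b_lt n).
  have [U [t2 [t0t2 gU]]] := g_bounded_on_strips gC n.+1%:R.
  have [s ns s_above] :=
    exists_time_above_line ba (ltr0Sn _ _) t0t2 gU (upper_growth_gt aL) n%:R.
  by exists s.
exists tb; split; first by apply: nat_le_cvgry => n; have [] := tb_spec n.
apply: lee_lt_fin => a aL; have [a' aa' a'L] := EFin_lt_dense aL.
apply: limf_einf_ge_near.
apply: filterS (nbhs_pinfty_gt (num_real (Num.max 0 ((1 + S) / (a' - a))))) => h /=.
rewrite gt_max ltr_pdivrMr ?subr_gt0 // => /andP[h0 hS].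
have h_le : \forall n \near \oo, h <= n.+1%:R.
  by exists (Num.truncn h) => // n /= hn; apply/ltW/(lt_le_trans (truncnS_gt h)); rewrite ler_nat.
apply: limf_einf_ge_near; apply: filterS2 (b_approx a' a'L) h_le => n a'b hn /=.
have := (tb_spec n).2 h h0 hn.
have : a' * h <= b n * h by rewrite ler_wpM2r ?ltW.
by rewrite lee_fin ler_pdivlMr //; lra.
Qed.

Lemma exists_seq_upper_growth_le :
  exists tb : R^nat, tb n @[n --> \oo] --> +oo /\ (upper_growth <= lower_growth_along tb)%E.
Proof.
have [[C [t1 gC]]|unbdd] := pselect (exists C t1, forall t, t1 <= t -> g t 1 <= C).
  exact: exists_seq_upper_growth_le_of_bounded gC.
have [tb [tb_cvg tb_infty]] := exists_seq_lower_growth_infty unbdd.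
by exists tb; split => //; rewrite tb_infty leey.
Qed.

End cocycle.

Theorem proposition5p5 (R : realType) (g : R -> R -> R) (t0 S : R)
  (ht0 : 0 <= t0)
  (hmono : forall t h k : R, 0 < t -> 0 <= h -> h <= k -> g t h <= g t k)
  (hS : cocycle_defect_sup g t0 = S%:E) :
  (forall tn : R^nat, tn n @[n --> \oo] --> +oo ->
     (limf_esup (fun h => limn_esup (fun n => (g (tn n) h / h)%:E)) (pinfty_nbhs R)
      <= limf_esup (fun h => limf_esup (fun t => (g t h / h)%:E) (pinfty_nbhs R)) (pinfty_nbhs R))%E)
  /\
  (forall kappa : R, 0 < kappa ->
     exists tb : R^nat, tb n @[n --> \oo] --> +oo /\
     (limf_esup (fun h => limf_esup (fun t => (g t h / h)%:E) (pinfty_nbhs R)) (pinfty_nbhs R)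
      <= limf_einf (fun h => limn_einf (fun n => (g (tb n) h / h)%:E)) (pinfty_nbhs R)
         + (2 * S / kappa)%:E)%E).
Proof.
split=> [tn tn_cvg|kappa kappa_gt0].
  apply: le_limf_esup => h.
  exact: (limf_esup_comp_le (f := fun t => (g t h / h)%:E) tn_cvg).
have [tb [tb_cvg growth_le]] := exists_seq_upper_growth_le ht0 hmono hS.
exists tb; split => //; apply: (le_trans growth_le); apply: leeDl.
by rewrite lee_fin divr_ge0 ?mulr_ge0 ?(defect_ge0 hS) ?(ltW kappa_gt0).
Qed.
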